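(* Let $G$ be a nice graph of order $n$, size $m$ and maximum degree $\Delta$. Then ${\rm ME}^{\rm W}(G) \leq {\rm ML}^{\rm W}(G) \leq m \cdot {\rm ME}^{\rm W}(G)$, ${\rm MV}^{\rm W}(G) \leq {\rm ML}^{\rm W}(G) \leq \frac{n}{2}\cdot {\rm MV}^{\rm W}(G)$, and ${\rm ME}^{\rm W}(G) \leq {\rm MV}^{\rm W}(G) \leq \Delta \cdot {\rm ME}^{\rm W}(G)$.
   Context: All graphs are finite and simple. A walk of a graph $G$ is a sequence of vertices $u_0u_1\dots u_p$ with $u_tu_{t+1}\in E(G)$ for all $t$ (vertices and edges may repeat); its length is $p$. For a walk $W$ of $G$, $G+W$ is the multigraph on $V(G)$ whose edge multiset consists of $E(G)$ together with each edge $e$ added as many times as $W$ traverses $e$. A multigraph is locally irregular if no two adjacent vertices have the same degree; $W$ is irregularising if $G+W$ is locally irregular. A graph is nice if it is connected and not isomorphic to $K_2$. ${\rm ML}^{\rm W}(G)$ is the minimum length of an irregularising walk of $G$; ${\rm ME}^{\rm W}(G)$ is the minimum, over irregularising walks $W$ of $G$, of the maximum number of times $W$ traverses an edge; ${\rm MV}^{\rm W}(G)$ is the minimum, over irregularising walks $W$ of $G$, of the maximum over vertices $v$ of the number of edges of $W$ (counted with multiplicity) incident to $v$. *)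

From mathcomp Require Import all_boot.
Set Implicit Arguments. Unset Strict Implicit. Unset Printing Implicit Defensive.

Section Graphs.
Variable T : finType.

Definition simple_graph (e : rel T) : Prop := symmetric e /\ irreflexive e.

Definition connected_graph (e : rel T) : Prop :=
  0 < #|T| /\ forall x y : T, connect e x y.

Definition is_K2 (e : rel T) : Prop :=
  exists x y : T, [/\ x != y, e x y & forall z : T, z = x \/ z = y].

Definition nice (e : rel T) : Prop := connected_graph e /\ ~ is_K2 e.

Definition order_of : nat := #|T|.

(* size: number of edges, edges being 2-subsets {u,v} *)
Definition size_of (e : rel T) : nat :=
  #|[set [set u; v] | u in T, v in T & e u v]|.

Definition deg (e : rel T) (v : T) : nat := #|[set u | e v u]|.

Definition max_deg (e : rel T) : nat := \max_(v : T) deg e v.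

(* A walk u_0 u_1 ... u_p is represented by its start x0 and the sequence
   p = [:: u_1; ...; u_p] with path e x0 p; its length is size p. *)
Definition is_walk (e : rel T) (x0 : T) (p : seq T) : Prop := path e x0 p.

Definition walk_length (x0 : T) (p : seq T) : nat := size p.

Definition trav (x0 : T) (p : seq T) (u v : T) : nat :=
  count (fun ab : T * T => ((ab.1 == u) && (ab.2 == v)) || ((ab.1 == v) && (ab.2 == u)))
        (zip (x0 :: p) p).

Definition winc (e : rel T) (x0 : T) (p : seq T) (v : T) : nat :=
  \sum_(u | e v u) trav x0 p u v.

(* degree of v in the multigraph G + W *)
Definition degGW (e : rel T) (x0 : T) (p : seq T) (v : T) : nat :=
  \sum_(u | e v u) (1 + trav x0 p u v).

Definition locally_irregular_GW (e : rel T) (x0 : T) (p : seq T) : Prop :=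
  forall u v : T, e u v -> degGW e x0 p u != degGW e x0 p v.

Definition irregularising (e : rel T) (x0 : T) (p : seq T) : Prop :=
  is_walk e x0 p /\ locally_irregular_GW e x0 p.

Definition max_edge_trav (e : rel T) (x0 : T) (p : seq T) : nat :=
  \max_(u : T) \max_(v | e u v) trav x0 p u v.

Definition max_vertex_inc (e : rel T) (x0 : T) (p : seq T) : nat :=
  \max_(v : T) winc e x0 p v.

Definition is_min_irr (e : rel T) (f : T -> seq T -> nat) (k : nat) : Prop :=
  (exists x0 p, irregularising e x0 p /\ f x0 p = k) /\
  (forall x0 p, irregularising e x0 p -> k <= f x0 p).

Definition is_MLW (e : rel T) (k : nat) : Prop := is_min_irr e walk_length k.
Definition is_MEW (e : rel T) (k : nat) : Prop := is_min_irr e (max_edge_trav e) k.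
Definition is_MVW (e : rel T) (k : nat) : Prop := is_min_irr e (max_vertex_inc e) k.

End Graphs.

From mathcomp Require Import all_boot.
Set Implicit Arguments. Unset Strict Implicit. Unset Printing Implicit Defensive.

(* Every inequality holds between the parameters of each single irregularising
   walk W, hence between the minima.  Each of the l steps of W runs along an
   edge: grouping the steps by edge gives l <= m * (max traversals of an edge),
   and grouping them by endpoint, since a step has exactly two distinct
   endpoints, gives sum_v inc(v) = 2 l, whence inc(v) <= l and 2 l <= n * max inc.
   Finally inc(v) is the sum of the traversal counts of the deg(v) edges at v. *)

Lemma count_sum (A : Type) (a : pred A) (s : seq A) : count a s = \sum_(x <- s) a x.
Proof. by rewrite -sum1_count big_mkcond. Qed.

Lemma sum_count (A : Type) (I : finType) (P : pred I) (a : I -> pred A) (s : seq A) :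
  \sum_(i | P i) count (a i) s = \sum_(x <- s) \sum_(i | P i) a i x.
Proof.
under eq_bigr => i _ do rewrite count_sum.
exact: exchange_big.
Qed.

Lemma is_min_irr_scaled_leq (T : finType) (e : rel T) (f g : T -> seq T -> nat) kf kg a c :
  is_min_irr e f kf -> is_min_irr e g kg ->
  (forall x0 p, irregularising e x0 p -> a * f x0 p <= c * g x0 p) ->
  a * kf <= c * kg.
Proof.
move=> [_ f_min] [[x0 [p [irr <-]]] _] fg; apply: leq_trans (fg _ _ irr).
by rewrite leq_mul2l f_min ?orbT.
Qed.

Lemma is_min_irr_leq (T : finType) (e : rel T) (f g : T -> seq T -> nat) kf kg :
  is_min_irr e f kf -> is_min_irr e g kg ->
  (forall x0 p, irregularising e x0 p -> f x0 p <= g x0 p) -> kf <= kg.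
Proof.
move=> f_min g_min fg; rewrite -[kf]mul1n -[kg]mul1n.
by apply: (is_min_irr_scaled_leq f_min g_min) => x0 p /fg; rewrite !mul1n.
Qed.

Section Walks.
Variable T : finType.
Implicit Types (u v a b : T) (p : seq T) (ab : T * T).

Definition steps (x0 : T) p : seq (T * T) := zip (x0 :: p) p.

Definition joins u v ab : bool :=
  ((ab.1 == u) && (ab.2 == v)) || ((ab.1 == v) && (ab.2 == u)).

Lemma size_steps x0 p : size (steps x0 p) = size p.
Proof. by rewrite size_zip /= (minn_idPr (leqnSn _)). Qed.

Lemma travE x0 p u v : trav x0 p u v = count (joins u v) (steps x0 p).
Proof. by []. Qed.

Lemma trav_sym x0 p u v : trav x0 p u v = trav x0 p v u.
Proof. by rewrite !travE; apply: eq_count => ab; rewrite /joins orbC. Qed.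

Lemma trav_le_size x0 p u v : trav x0 p u v <= size p.
Proof. by rewrite travE -(size_steps x0) count_size. Qed.

Lemma set2_eqE a b u v : ([set a; b] == [set u; v]) = joins u v (a, b).
Proof.
apply/eqP/idP => [/setP E | ]; last first.
  by rewrite /joins /= => /orP [] /andP [/eqP -> /eqP ->]; rewrite // setUC.
move: (E a) (E b) (E u) (E v); rewrite /joins /= !inE !eqxx /= ?orbT.
by do ![case: eqP => //= ?; subst] => //; rewrite eqxx.
Qed.

Lemma travE_set2 x0 p u v :
  trav x0 p u v = count (fun ab => [set ab.1; ab.2] == [set u; v]) (steps x0 p).
Proof. by rewrite travE; apply: eq_count => -[a b]; rewrite set2_eqE. Qed.

Section EdgeBounds.
Variable e : rel T.

Lemma steps_edges x0 p : path e x0 p -> all (fun ab => e ab.1 ab.2) (steps x0 p).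
Proof. by elim: p x0 => [|y p IH] x0 //= /andP [-> /IH]. Qed.

Lemma trav_le_max_edge_trav x0 p u v : e u v -> trav x0 p u v <= max_edge_trav e x0 p.
Proof.
move=> euv; apply: leq_trans (leq_bigmax u).
exact: (leq_bigmax_cond (F := fun v => trav x0 p u v) _ euv).
Qed.

Lemma max_edge_trav_le_size x0 p : max_edge_trav e x0 p <= size p.
Proof. by apply/bigmax_leqP => u _; apply/bigmax_leqP => v _; apply: trav_le_size. Qed.

Lemma size_le_size_of_mul x0 p :
  path e x0 p -> size p <= size_of e * max_edge_trav e x0 p.
Proof.
move=> /steps_edges walk_edges.
set S := [set [set u; v] | u in T, v in T & e u v].
have edge_in_S ab : ab \in steps x0 p -> [set ab.1; ab.2] \in S.
  by move=> ab_s; apply/imset2P; exists ab.1 ab.2; rewrite ?inE ?(allP walk_edges).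
have -> : size p = \sum_(E in S) count (fun ab => [set ab.1; ab.2] == E) (steps x0 p).
  rewrite sum_count -(size_steps x0) -sum1_size big_seq [RHS]big_seq.
  apply: eq_bigr => ab /edge_in_S ab_S.
  rewrite (bigD1 [set ab.1; ab.2]) //= eqxx big1 // => E /andP [_].
  by rewrite eq_sym => /negbTE ->.
rewrite -sum_nat_const; apply: leq_sum => _ /imset2P [u v _ + ->]; rewrite inE => euv.
by rewrite -travE_set2 trav_le_max_edge_trav.
Qed.

Lemma max_edge_trav_le_max_vertex_inc x0 p :
  symmetric e -> max_edge_trav e x0 p <= max_vertex_inc e x0 p.
Proof.
move=> esym; apply/bigmax_leqP => u _; apply/bigmax_leqP => v euv.
apply: leq_trans (leq_bigmax v).
have evu : e v u by rewrite esym.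
by rewrite /winc (bigD1 u) //= leq_addr.
Qed.

Lemma max_vertex_inc_le_max_deg_mul x0 p :
  max_vertex_inc e x0 p <= max_deg e * max_edge_trav e x0 p.
Proof.
apply/bigmax_leqP => v _.
apply: (@leq_trans (\sum_(u | e v u) max_edge_trav e x0 p)).
  by apply: leq_sum => u evu; rewrite trav_sym trav_le_max_edge_trav.
rewrite sum_nat_cond_const leq_mul2r; apply/orP; right.
exact: leq_bigmax.
Qed.

Section SimpleGraph.
Hypotheses (esym : symmetric e) (eirr : irreflexive e).

Lemma edge_neq a b : e a b -> a != b.
Proof. by apply: contraTneq => ->; rewrite eirr. Qed.

Lemma sum_joins_edge v a b :
  e a b -> \sum_(u | e v u) joins u v (a, b) = (a == v) || (b == v).
Proof.
move=> eab; have ab_neq := edge_neq eab.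
have sum_eq1 c : e v c -> \sum_(u | e v u) (c == u) = 1.
  move=> evc; rewrite (bigD1 c) //= eqxx big1 // => u /andP [_ uc].
  by rewrite eq_sym (negbTE uc).
rewrite /joins /=; have [av|av] := eqVneq a v.
  subst a; rewrite eq_sym (negbTE ab_neq).
  by under eq_bigr do rewrite andbF orFb; exact: sum_eq1.
have [bv|bv] := eqVneq b v; last by rewrite big1 // => u _; rewrite !andbF.
subst b; under eq_bigr do rewrite andbT andFb orbF.
by rewrite sum_eq1 // esym.
Qed.

Lemma wincE x0 p v : path e x0 p ->
  winc e x0 p v = count (fun ab => (ab.1 == v) || (ab.2 == v)) (steps x0 p).
Proof.
move=> /steps_edges/allP walk_edges; rewrite /winc sum_count count_sum.
by rewrite big_seq [RHS]big_seq; apply: eq_bigr => -[a b] /walk_edges; apply: sum_joins_edge.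
Qed.

Lemma max_vertex_inc_le_size x0 p : path e x0 p -> max_vertex_inc e x0 p <= size p.
Proof.
by move=> walk; apply/bigmax_leqP => v _; rewrite wincE // -(size_steps x0) count_size.
Qed.

Lemma sum_winc x0 p : path e x0 p -> \sum_(v : T) winc e x0 p v = 2 * size p.
Proof.
move=> walk; have /allP walk_edges := steps_edges walk.
under eq_bigr => v _ do rewrite wincE //.
rewrite sum_count -(size_steps x0) -sum1_size big_distrr big_seq [RHS]big_seq /=.
apply: eq_bigr => -[a b] /walk_edges /edge_neq /= ab_neq.
rewrite (bigD1 a) // (bigD1 b) 1?eq_sym //= !eqxx orbT big1 // => v /andP [vb va].
by rewrite ![_ == v]eq_sym (negbTE va) (negbTE vb).
Qed.

Lemma double_size_le_card_mul x0 p :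
  path e x0 p -> 2 * size p <= #|T| * max_vertex_inc e x0 p.
Proof.
move=> walk; rewrite -(sum_winc walk) -sum_nat_const.
by apply: leq_sum => v _; apply: leq_bigmax.
Qed.

End SimpleGraph.
End EdgeBounds.
End Walks.

Theorem mainTheorem1 (T : finType) (e : rel T) (ML ME MV : nat) :
  simple_graph e -> nice e ->
  is_MLW e ML -> is_MEW e ME -> is_MVW e MV ->
  (ME <= ML /\ ML <= size_of e * ME) /\
  (MV <= ML /\ 2 * ML <= order_of T * MV) /\
  (ME <= MV /\ MV <= max_deg e * ME).
Proof.
(* [nice e] only guarantees that the minima exist, which the [is_M*W] hypotheses assert. *)
move=> [esym eirr] _ isML isME isMV.
have walk x0 p : irregularising e x0 p -> path e x0 p by case.
split; [split | split; [split | split]].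
- apply: (is_min_irr_leq isME isML) => x0 p _; exact: max_edge_trav_le_size.
- rewrite -[ML]mul1n; apply: (is_min_irr_scaled_leq isML isME) => x0 p /walk.
  by rewrite mul1n; apply: size_le_size_of_mul.
- apply: (is_min_irr_leq isMV isML) => x0 p /walk; exact: max_vertex_inc_le_size.
- apply: (is_min_irr_scaled_leq isML isMV) => x0 p /walk.
  exact: double_size_le_card_mul.
- apply: (is_min_irr_leq isME isMV) => x0 p _.
  exact: max_edge_trav_le_max_vertex_inc.
- rewrite -[MV]mul1n; apply: (is_min_irr_scaled_leq isMV isME) => x0 p _.
  by rewrite mul1n; apply: max_vertex_inc_le_max_deg_mul.
Qed.
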